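(* Let $\alpha>2$ and $N>0$, and define for $p\in[0,1]$ and $\beta>0$ \[ R(p,\beta)=p\,\log(1+\beta)\,e^{-N p\,\beta^{2/\alpha}} . \] Let $\Lambda^*=\Lambda^*(\alpha)>0$ denote the unique solution of \[ \frac{\alpha}{2}=\left(1+{\Lambda^*}^{\alpha/2}\right)\log\left(1+\frac{1}{{\Lambda^*}^{\alpha/2}}\right). \] If $N>\Lambda^*$, then $R$ is maximized over $[0,1]\times(0,\infty)$ at $p^*=\Lambda^*/N$ and $\beta^*={\Lambda^*}^{-\alpha/2}$. If $N\le\Lambda^*$, then $R$ is maximized at $p^*=1$ and $\beta^*$ equal to the unique solution of \[ \frac{\alpha}{2N{\beta^*}^{2/\alpha}}=\left(1+\frac{1}{\beta^*}\right)\log(1+\beta^* ). \]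
   Context: $R(p,\beta)$ is the limiting expected throughput per link of a single wireless network using a random access protocol with access probability $p$ and target signal-to-interference ratio $\beta$, where $N$ is the average number of nodes per transmission disc and $\alpha$ is the pathloss exponent. $\log$ denotes the natural logarithm. *)

From Stdlib Require Import Reals.
Open Scope R_scope.

(* R(p,beta) = p log(1+beta) exp(-N p beta^(2/alpha)); beta > 0 so Rpower is the usual power. *)
Definition rate (N alpha p beta : R) : R :=
  p * ln (1 + beta) * exp (- (N * p * Rpower beta (2 / alpha))).

Definition is_maximizer (f : R -> R -> R) (p0 b0 : R) : Prop :=
  (0 <= p0 <= 1) /\ 0 < b0 /\
  forall p b, 0 <= p <= 1 -> 0 < b -> f p b <= f p0 b0.

Definition lambda_star_eq (alpha L : R) : Prop :=
  alpha / 2 = (1 + Rpower L (alpha / 2)) * ln (1 + / Rpower L (alpha / 2)).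

Definition beta_star_eq (alpha N b : R) : Prop :=
  alpha / (2 * N * Rpower b (2 / alpha)) = (1 + / b) * ln (1 + b).

(* For fixed beta, set c = N beta^(2/alpha): p e^(-c p) is maximal at p = 1/c,
   so R(p, beta) <= h(beta) / (e N) with h(beta) = log(1 + beta) / beta^(2/alpha),
   and when c <= 1 it is increasing on [0, 1], so R(p, beta) <= R(1, beta).
   The derivatives of h and of R(1, .) are a positive factor times 1 - g with g
   increasing (g = (2/alpha) phi, resp. N (2/alpha) beta^(2/alpha) phi, where
   phi(beta) = (1 + 1/beta) log(1 + beta)), so both are unimodal.  The critical
   point of h is Lambda*^(-alpha/2); it satisfies c > 1 exactly when Lambda* < N,
   and then the first bound is attained at p = Lambda*/N.  Otherwise the maximum
   lies on p = 1, at the critical point of R(1, .). *)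

From Stdlib Require Import Reals Lra.
From Coquelicot Require Import Coquelicot.
Open Scope R_scope.

Lemma Rpower_gt_0 (x y : R) : 0 < Rpower x y.
Proof. apply exp_pos. Qed.

Lemma Rpower_mult_inv (x y z : R) : 0 < x -> y * z = 1 -> Rpower (Rpower x y) z = x.
Proof. intros Hx Hyz. rewrite Rpower_mult, Hyz. now apply Rpower_1. Qed.

Lemma Rpower_le_reg_l (a x y : R) :
  0 < a -> 0 < x -> 0 < y -> Rpower x a <= Rpower y a -> x <= y.
Proof.
  intros Ha Hx Hy Hle. destruct (Rle_lt_dec x y) as [|Hyx]; [assumption|].
  pose proof (Rlt_Rpower_l y x a Ha (conj Hy Hyx)). lra.
Qed.

Lemma Rpower_lt_1 (x c : R) : 0 < c -> 0 < x < 1 -> Rpower x c < 1.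
Proof.
  intros Hc Hx. unfold Rpower. rewrite <- exp_0. apply exp_increasing.
  assert (ln x < 0) by (rewrite <- ln_1; apply ln_increasing; lra). nra.
Qed.

Lemma ln_1p_gt_0 (x : R) : 0 < x -> 0 < ln (1 + x).
Proof. intro Hx. rewrite <- ln_1. apply ln_increasing; lra. Qed.

Lemma ln_1p_lt (x : R) : 0 < x -> ln (1 + x) < x.
Proof.
  intro Hx. rewrite <- (ln_exp x) at 2.
  apply ln_increasing; [lra | apply exp_ineq1; lra].
Qed.

Lemma deriv_nonneg_le (f f' : R -> R) (x y : R) : x <= y ->
  (forall c, x <= c <= y -> derivable_pt_lim f c (f' c)) ->
  (forall c, x < c < y -> 0 <= f' c) -> f x <= f y.
Proof.
  intros Hxy Hd Hpos. destruct (Req_dec x y) as [<-|Hne]; [lra|].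
  destruct (MVT_cor2 f f' x y ltac:(lra) Hd) as [c [Hmvt Hc]].
  pose proof (Rmult_le_pos _ (y - x) (Hpos c Hc) ltac:(lra)). lra.
Qed.

Lemma deriv_nonpos_ge (f f' : R -> R) (x y : R) : x <= y ->
  (forall c, x <= c <= y -> derivable_pt_lim f c (f' c)) ->
  (forall c, x < c < y -> f' c <= 0) -> f y <= f x.
Proof.
  intros Hxy Hd Hneg.
  enough (- f x <= - f y) by lra.
  apply (deriv_nonneg_le (fun t => - f t) (fun t => - f' t)); [assumption | |].
  - intros c Hc. apply derivable_pt_lim_opp, Hd, Hc.
  - intros c Hc. pose proof (Hneg c Hc). lra.
Qed.

Section Unimodal.

Variables (f w g : R -> R) (c : R).
Hypothesis c_gt_0 : 0 < c.
Hypothesis f_derive : forall x, 0 < x -> derivable_pt_lim f x (w x * (1 - g x)).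
Hypothesis w_gt_0 : forall x, 0 < x -> 0 < w x.
Hypothesis g_increasing : forall x y, 0 < x -> x < y -> g x < g y.
Hypothesis g_c : g c = 1.

Lemma unimodal_nonincreasing (x y : R) : c <= x -> x <= y -> f y <= f x.
Proof.
  intros Hcx Hxy. apply (deriv_nonpos_ge f (fun t => w t * (1 - g t))); [assumption | |].
  - intros t Ht. apply f_derive. lra.
  - intros t Ht. pose proof (w_gt_0 t ltac:(lra)).
    pose proof (g_increasing c t c_gt_0 ltac:(lra)).
    enough (0 <= w t * (g t - 1)) by lra. apply Rmult_le_pos; lra.
Qed.

Lemma unimodal_le_max (x : R) : 0 < x -> f x <= f c.
Proof.
  intro Hx. destruct (Rle_lt_dec x c) as [Hxc|Hcx].
  - apply (deriv_nonneg_le f (fun t => w t * (1 - g t))); [assumption | |].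
    + intros t Ht. apply f_derive. lra.
    + intros t Ht. pose proof (w_gt_0 t ltac:(lra)).
      pose proof (g_increasing t c ltac:(lra) ltac:(lra)).
      apply Rmult_le_pos; lra.
  - apply unimodal_nonincreasing; lra.
Qed.

End Unimodal.

Lemma increasing_unique_root (g : R -> R) (x0 y0 : R) :
  (forall x y, 0 < x -> x < y -> g x < g y) ->
  (forall x, 0 < x -> continuity_pt g x) ->
  0 < x0 -> 0 < y0 -> g x0 <= 0 <= g y0 ->
  exists! x, 0 < x /\ g x = 0.
Proof.
  intros Hincr Hcont Hx0 Hy0 [Hgx0 Hgy0].
  assert (Hroot : exists x, 0 < x /\ g x = 0).
  { destruct (Req_dec (g x0) 0) as [|Hgx0']; [now exists x0|].
    destruct (Req_dec (g y0) 0) as [|Hgy0']; [now exists y0|].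
    assert (Hxy : x0 < y0).
    { destruct (Rlt_le_dec x0 y0) as [|Hyx]; [assumption|].
      destruct (Req_dec y0 x0) as [->|Hne]; [lra|].
      pose proof (Hincr y0 x0 Hy0 ltac:(lra)). lra. }
    destruct (Ranalysis5.IVT_interv g x0 y0) as [z [Hz Hgz]]; try lra.
    - intros t Ht. apply Hcont. lra.
    - exists z. split; [lra | assumption]. }
  destruct Hroot as [x [Hx Hgx]]. exists x. split; [now split|].
  intros y [Hy Hgy]. destruct (Rtotal_order x y) as [Hlt|[Heq|Hlt]]; [| assumption |].
  - pose proof (Hincr x y Hx Hlt). lra.
  - pose proof (Hincr y x Hy Hlt). lra.
Qed.

(* [beta_star_eq] reads [alpha / (2 N b^(2/alpha)) = phi b], and
   [lambda_star_eq] reads [phi (L^(-alpha/2)) = alpha/2]. *)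
Definition phi (x : R) : R := (1 + / x) * ln (1 + x).

Lemma phi_derive (x : R) : 0 < x -> is_derive phi x ((x - ln (1 + x)) / (x * x)).
Proof. intro Hx. unfold phi. auto_derive; [lra|]. field. lra. Qed.

Lemma phi_continuous (x : R) : 0 < x -> continuity_pt phi x.
Proof.
  intro Hx. apply derivable_continuous_pt.
  exists ((x - ln (1 + x)) / (x * x)). apply is_derive_Reals, phi_derive, Hx.
Qed.

Lemma phi_increasing (x y : R) : 0 < x -> x < y -> phi x < phi y.
Proof.
  intros Hx Hxy. apply (incr_function phi 0 p_infty (fun t => (t - ln (1 + t)) / (t * t)));
    simpl; try easy.
  - intros t Ht _. apply phi_derive, Ht.
  - intros t Ht _. pose proof (ln_1p_lt t Ht).
    apply Rdiv_lt_0_compat; [lra | apply Rmult_lt_0_compat; lra].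
Qed.

Lemma phi_gt_ln_1p (x : R) : 0 < x -> ln (1 + x) < phi x.
Proof.
  intro Hx. pose proof (Rmult_lt_0_compat _ _ (Rinv_0_lt_compat x Hx) (ln_1p_gt_0 x Hx)).
  unfold phi. rewrite Rmult_plus_distr_r, Rmult_1_l. lra.
Qed.

Lemma phi_lt_1p (x : R) : 0 < x -> phi x < 1 + x.
Proof.
  intro Hx. pose proof (ln_1p_lt x Hx). pose proof (Rinv_0_lt_compat x Hx).
  replace (1 + x) with ((1 + / x) * x) by (field; lra).
  apply Rmult_lt_compat_l; lra.
Qed.

Lemma mul_exp_opp_le_inv_exp (x : R) : x * exp (- x) <= / exp 1.
Proof.
  replace (/ exp 1) with (exp (x - 1) * exp (- x))
    by (rewrite <- exp_plus, <- exp_Ropp; f_equal; ring).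
  apply Rmult_le_compat_r; [apply Rlt_le, exp_pos|].
  pose proof (exp_ineq1_le (x - 1)). lra.
Qed.

Lemma mul_exp_opp_le_inv (c p : R) : 0 < c -> p * exp (- (c * p)) <= / (exp 1 * c).
Proof.
  intro Hc. replace (p * exp (- (c * p))) with (/ c * (c * p * exp (- (c * p)))) by (field; lra).
  replace (/ (exp 1 * c)) with (/ c * / exp 1)
    by (field; split; [lra | apply Rgt_not_eq, exp_pos]).
  apply Rmult_le_compat_l; [apply Rlt_le, Rinv_0_lt_compat, Hc | apply mul_exp_opp_le_inv_exp].
Qed.

Lemma mul_exp_opp_le_exp (c p : R) : c <= 1 -> p <= 1 -> p * exp (- (c * p)) <= exp (- c).
Proof.
  intros Hc Hp.
  replace (exp (- c)) with (exp (c * (p - 1)) * exp (- (c * p)))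
    by (rewrite <- exp_plus; f_equal; ring).
  apply Rmult_le_compat_r; [apply Rlt_le, exp_pos|].
  pose proof (exp_ineq1_le (c * (p - 1))). nra.
Qed.

Definition ln_1p_div_pow (a x : R) : R := ln (1 + x) / Rpower x a.

Lemma ln_1p_div_pow_derive (a x : R) : 0 < x ->
  derivable_pt_lim (ln_1p_div_pow a) x (/ ((1 + x) * Rpower x a) * (1 - a * phi x)).
Proof.
  intro Hx. apply is_derive_Reals. unfold ln_1p_div_pow, phi, Rpower.
  pose proof (exp_pos (a * ln x)).
  auto_derive; [repeat split; lra|]. field. repeat split; lra.
Qed.

Lemma rate_one_derive (N alpha x : R) : 0 < x ->
  derivable_pt_lim (rate N alpha 1) x
    (exp (- (N * Rpower x (2 / alpha))) / (1 + x)
     * (1 - N * (2 / alpha) * Rpower x (2 / alpha) * phi x)).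
Proof.
  intro Hx. apply is_derive_Reals. unfold rate, phi, Rpower.
  set (a := 2 / alpha). auto_derive; [lra|].
  replace (N * 1) with N by ring. field. lra.
Qed.

Section LnOnePlusDivPow.

Variables (a b : R).
Hypotheses (a_gt_0 : 0 < a) (b_gt_0 : 0 < b) (b_crit : a * phi b = 1).

Let scaled_phi_increasing (x y : R) : 0 < x -> x < y -> a * phi x < a * phi y.
Proof. intros Hx Hxy. apply Rmult_lt_compat_l, phi_increasing; assumption. Qed.

Let weight_gt_0 (x : R) : 0 < x -> 0 < / ((1 + x) * Rpower x a).
Proof.
  intro Hx. pose proof (Rpower_gt_0 x a).
  apply Rinv_0_lt_compat, Rmult_lt_0_compat; lra.
Qed.

Lemma ln_1p_div_pow_le_max (x : R) : 0 < x -> ln_1p_div_pow a x <= ln_1p_div_pow a b.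
Proof.
  apply (unimodal_le_max _ _ _ b b_gt_0 (ln_1p_div_pow_derive a)
           weight_gt_0 scaled_phi_increasing b_crit).
Qed.

Lemma ln_1p_div_pow_nonincreasing (x y : R) :
  b <= x -> x <= y -> ln_1p_div_pow a y <= ln_1p_div_pow a x.
Proof.
  apply (unimodal_nonincreasing _ _ _ b b_gt_0 (ln_1p_div_pow_derive a)
           weight_gt_0 scaled_phi_increasing b_crit).
Qed.

End LnOnePlusDivPow.

Lemma rate_one_le_max (N alpha b x : R) : 0 < N -> 0 < alpha -> 0 < b ->
  N * (2 / alpha) * Rpower b (2 / alpha) * phi b = 1 ->
  0 < x -> rate N alpha 1 x <= rate N alpha 1 b.
Proof.
  intros HN Halpha Hb Hcrit.
  assert (Ha : 0 < 2 / alpha) by (apply Rdiv_lt_0_compat; lra).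
  apply (unimodal_le_max _ (fun t => exp (- (N * Rpower t (2 / alpha))) / (1 + t)) _ b Hb
           (rate_one_derive N alpha)); [| | exact Hcrit].
  - intros t Ht. apply Rdiv_lt_0_compat; [apply exp_pos | lra].
  - intros s t Hs Hst.
    pose proof (Rlt_Rpower_l s t (2 / alpha) Ha (conj Hs Hst)).
    pose proof (phi_increasing s t Hs Hst).
    pose proof (Rpower_gt_0 s (2 / alpha)).
    pose proof (phi_gt_ln_1p s Hs). pose proof (ln_1p_gt_0 s Hs).
    assert (HNa : 0 < N * (2 / alpha)) by (apply Rmult_lt_0_compat; lra).
    apply Rmult_le_0_lt_compat; [nra | lra | | assumption].
    apply Rmult_lt_compat_l; assumption.
Qed.

Lemma rate_eq_mul_exp (N alpha p b : R) :
  rate N alpha p b = ln (1 + b) * (p * exp (- ((N * Rpower b (2 / alpha)) * p))).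
Proof.
  unfold rate.
  replace (N * p * Rpower b (2 / alpha)) with (N * Rpower b (2 / alpha) * p) by ring. ring.
Qed.

Lemma rate_le_ln_1p_div_pow (N alpha p b : R) : 0 < N -> 0 < b ->
  rate N alpha p b <= ln_1p_div_pow (2 / alpha) b / (exp 1 * N).
Proof.
  intros HN Hb. rewrite rate_eq_mul_exp.
  pose proof (Rpower_gt_0 b (2 / alpha)). pose proof (ln_1p_gt_0 b Hb). pose proof (exp_pos 1).
  apply Rle_trans with (ln (1 + b) * / (exp 1 * (N * Rpower b (2 / alpha)))).
  - apply Rmult_le_compat_l; [lra|]. apply mul_exp_opp_le_inv, Rmult_lt_0_compat; assumption.
  - right. unfold ln_1p_div_pow. field. repeat split; lra.
Qed.

Lemma rate_le_rate_one (N alpha p b : R) : 0 < b -> p <= 1 ->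
  N * Rpower b (2 / alpha) <= 1 -> rate N alpha p b <= rate N alpha 1 b.
Proof.
  intros Hb Hp Hc. rewrite !rate_eq_mul_exp, Rmult_1_l, Rmult_1_r.
  apply Rmult_le_compat_l; [apply Rlt_le, ln_1p_gt_0, Hb|].
  apply mul_exp_opp_le_exp; assumption.
Qed.

(* [p = 1 / (N b^(2/alpha))] is where [rate_le_ln_1p_div_pow] is attained. *)
Lemma rate_at_balance (N alpha p b : R) : 0 < N ->
  N * p * Rpower b (2 / alpha) = 1 ->
  rate N alpha p b = ln_1p_div_pow (2 / alpha) b / (exp 1 * N).
Proof.
  intros HN Hbal. pose proof (Rpower_gt_0 b (2 / alpha)). pose proof (exp_pos 1).
  assert (Hp : p = / (N * Rpower b (2 / alpha)))
    by (rewrite <- (Rmult_1_l (/ _)), <- Hbal; field; lra).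
  unfold rate, ln_1p_div_pow. rewrite Hbal, exp_Ropp, Hp. field. repeat split; lra.
Qed.

Lemma lambda_star_eq_iff (alpha L : R) :
  lambda_star_eq alpha L <-> phi (Rpower L (- (alpha / 2))) = alpha / 2.
Proof.
  unfold lambda_star_eq, phi. rewrite Rpower_Ropp, Rinv_inv.
  split; intro; symmetry; assumption.
Qed.

Lemma Rpower_lambda_star (alpha L : R) : 0 < alpha -> 0 < L ->
  Rpower (Rpower L (- (alpha / 2))) (2 / alpha) = / L.
Proof.
  intros Halpha HL. rewrite Rpower_mult.
  replace (- (alpha / 2) * (2 / alpha)) with (Ropp 1) by (field; lra).
  rewrite Rpower_Ropp, Rpower_1; [reflexivity | assumption].
Qed.

Lemma Rpower_lambda_star_le (alpha N L : R) : 0 < alpha -> 0 < N -> N <= L ->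
  Rpower L (- (alpha / 2)) <= Rpower (/ N) (alpha / 2).
Proof.
  intros Halpha HN HNL.
  apply (Rpower_le_reg_l (2 / alpha)); try apply Rpower_gt_0.
  - apply Rdiv_lt_0_compat; lra.
  - rewrite Rpower_lambda_star, Rpower_mult_inv by (try apply Rinv_0_lt_compat; try field; lra).
    apply Rinv_le_contravar; assumption.
Qed.

Lemma lambda_star_exists_unique (alpha : R) : 2 < alpha ->
  exists! L, 0 < L /\ lambda_star_eq alpha L.
Proof.
  intro Halpha.
  assert (Hroot : exists! b, 0 < b /\ phi b - alpha / 2 = 0).
  { apply (increasing_unique_root _ ((alpha / 2 - 1) / 2) (exp (alpha / 2) - 1)).
    - intros x y Hx Hxy. pose proof (phi_increasing x y Hx Hxy). lra.
    - intros x Hx. apply continuity_pt_minus;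
        [apply phi_continuous, Hx | apply continuity_pt_const; intros u v; reflexivity].
    - lra.
    - pose proof (exp_ineq1 (alpha / 2)). lra.
    - pose proof (exp_ineq1 (alpha / 2) ltac:(lra)).
      pose proof (phi_lt_1p ((alpha / 2 - 1) / 2) ltac:(lra)).
      pose proof (phi_gt_ln_1p (exp (alpha / 2) - 1) ltac:(lra)) as Hupper.
      rewrite Rplus_minus, ln_exp in Hupper. lra. }
  destruct Hroot as [b [[Hb Hphib] Hbuniq]].
  assert (Hinv : (- (2 / alpha)) * (- (alpha / 2)) = 1) by (field; lra).
  exists (Rpower b (- (2 / alpha))). split.
  - split; [apply Rpower_gt_0|].
    apply lambda_star_eq_iff. rewrite Rpower_mult_inv by assumption. lra.
  - intros L [HL HLeq]. apply lambda_star_eq_iff in HLeq.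
    rewrite (Hbuniq (Rpower L (- (alpha / 2)))).
    + apply Rpower_mult_inv; [assumption | field; lra].
    + split; [apply Rpower_gt_0 | lra].
Qed.

Definition beta_star_gap (alpha N b : R) : R :=
  phi b - alpha / (2 * N * Rpower b (2 / alpha)).

Lemma beta_star_eq_iff_gap (alpha N b : R) :
  beta_star_eq alpha N b <-> beta_star_gap alpha N b = 0.
Proof. unfold beta_star_eq, beta_star_gap, phi. split; intro; lra. Qed.

Lemma beta_star_gap_increasing (alpha N x y : R) : 0 < alpha -> 0 < N ->
  0 < x -> x < y -> beta_star_gap alpha N x < beta_star_gap alpha N y.
Proof.
  intros Halpha HN Hx Hxy. unfold beta_star_gap.
  pose proof (phi_increasing x y Hx Hxy).
  pose proof (Rlt_Rpower_l x y (2 / alpha) ltac:(apply Rdiv_lt_0_compat; lra) (conj Hx Hxy)).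
  pose proof (Rpower_gt_0 x (2 / alpha)).
  enough (alpha / (2 * N * Rpower y (2 / alpha)) < alpha / (2 * N * Rpower x (2 / alpha)))
    by lra.
  apply Rmult_lt_compat_l; [lra|].
  apply Rinv_lt_contravar; [apply Rmult_lt_0_compat; apply Rmult_lt_0_compat|]; nra.
Qed.

Lemma beta_star_gap_continuous (alpha N x : R) : 0 < N -> 0 < x ->
  continuity_pt (beta_star_gap alpha N) x.
Proof.
  intros HN Hx. apply derivable_continuous_pt, ex_derive_Reals_0.
  unfold beta_star_gap, phi, Rpower. pose proof (exp_pos (2 / alpha * ln x)).
  auto_derive. repeat split; try lra. apply Rgt_not_eq, Rmult_lt_0_compat; lra.
Qed.

Lemma beta_star_exists_unique (alpha N L : R) : 2 < alpha -> 0 < N ->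
  lambda_star_eq alpha L -> N <= L ->
  exists! b, 0 < b /\ beta_star_eq alpha N b.
Proof.
  intros Halpha HN HLeq HNL.
  set (b0 := Rpower (/ (2 * N + 2)) (alpha / 2)).
  set (b1 := Rpower (/ N) (alpha / 2)).
  assert (Hgap : exists! b, 0 < b /\ beta_star_gap alpha N b = 0).
  { apply (increasing_unique_root _ b0 b1); try apply Rpower_gt_0.
    - intros x y. apply beta_star_gap_increasing; lra.
    - intro x. apply beta_star_gap_continuous, HN.
    - unfold beta_star_gap. split.
      + assert (Hb0 : b0 < 1) by (apply Rpower_lt_1; [lra | split;
          [apply Rinv_0_lt_compat | rewrite <- Rinv_1; apply Rinv_lt_contravar]; lra]).
        unfold b0 at 2. rewrite Rpower_mult_inv by (try apply Rinv_0_lt_compat; try field; lra).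
        pose proof (phi_lt_1p b0 ltac:(apply Rpower_gt_0)).
        replace (alpha / (2 * N * / (2 * N + 2))) with (alpha + alpha / N) by (field; lra).
        pose proof (Rdiv_lt_0_compat alpha N ltac:(lra) HN). lra.
      + unfold b1 at 2. rewrite Rpower_mult_inv by (try apply Rinv_0_lt_compat; try field; lra).
        replace (alpha / (2 * N * / N)) with (alpha / 2) by (field; lra).
        apply lambda_star_eq_iff in HLeq.
        pose proof (Rpower_lambda_star_le alpha N L ltac:(lra) HN HNL) as Hle. fold b1 in Hle.
        destruct (Rle_lt_or_eq_dec _ _ Hle) as [Hlt|Heq]; [|rewrite <- Heq; lra].
        pose proof (phi_increasing _ _ (Rpower_gt_0 L (- (alpha / 2))) Hlt). lra. }
  destruct Hgap as [b [[Hb Hgb] Huniq]]. exists b. split.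
  - split; [assumption | apply beta_star_eq_iff_gap, Hgb].
  - intros b' [Hb' Hb'eq]. apply Huniq. split; [assumption | apply beta_star_eq_iff_gap, Hb'eq].
Qed.

Section Maximizer.

Variables (alpha N L : R).
Hypotheses (alpha_gt_2 : 2 < alpha) (N_gt_0 : 0 < N) (L_gt_0 : 0 < L).
Hypothesis L_lambda_star : lambda_star_eq alpha L.

Let a_gt_0 : 0 < 2 / alpha.
Proof. apply Rdiv_lt_0_compat; lra. Qed.

Let b_crit : 2 / alpha * phi (Rpower L (- (alpha / 2))) = 1.
Proof. apply lambda_star_eq_iff in L_lambda_star. rewrite L_lambda_star. field. lra. Qed.

Lemma rate_max_interior : L < N ->
  is_maximizer (rate N alpha) (L / N) (Rpower L (- (alpha / 2))).
Proof.
  intro HLN. set (bs := Rpower L (- (alpha / 2))) in *.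
  assert (Hbs : 0 < bs) by apply Rpower_gt_0.
  split; [split; [apply Rlt_le, Rdiv_lt_0_compat | apply Rle_div_l]; lra|].
  split; [assumption|]. intros p b _ Hb.
  rewrite (rate_at_balance N alpha (L / N) bs N_gt_0)
    by (unfold bs; rewrite Rpower_lambda_star by lra; field; lra).
  apply Rle_trans with (1 := rate_le_ln_1p_div_pow N alpha p b N_gt_0 Hb).
  apply Rmult_le_compat_r.
  - apply Rlt_le, Rinv_0_lt_compat, Rmult_lt_0_compat; [apply exp_pos | assumption].
  - apply ln_1p_div_pow_le_max; assumption.
Qed.

(* For [N b^(2/alpha) <= 1] the optimal [p] is 1; beyond, the bound by
   [ln_1p_div_pow] takes over and is largest at the switching point [b1]. *)
Lemma rate_max_boundary (b : R) : N <= L -> 0 < b -> beta_star_eq alpha N b ->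
  is_maximizer (rate N alpha) 1 b.
Proof.
  intros HNL Hb Hbeq.
  assert (Hcrit : N * (2 / alpha) * Rpower b (2 / alpha) * phi b = 1).
  { unfold beta_star_eq in Hbeq. fold (phi b) in Hbeq. rewrite <- Hbeq.
    pose proof (Rpower_gt_0 b (2 / alpha)). field. repeat split; lra. }
  split; [lra|]. split; [assumption|]. intros p x [_ Hp] Hx.
  destruct (Rle_lt_dec (N * Rpower x (2 / alpha)) 1) as [Hsmall|Hlarge].
  - apply Rle_trans with (1 := rate_le_rate_one N alpha p x Hx Hp Hsmall).
    apply rate_one_le_max; lra.
  - set (b1 := Rpower (/ N) (alpha / 2)).
    assert (Hb1 : Rpower b1 (2 / alpha) = / N)
      by (apply Rpower_mult_inv; [apply Rinv_0_lt_compat | field]; lra).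
    assert (Hb1x : b1 <= x).
    { apply (Rpower_le_reg_l (2 / alpha)); [assumption | apply Rpower_gt_0 | assumption |].
      rewrite Hb1. apply Rlt_le, (Rmult_lt_reg_l N); [assumption|]. rewrite Rinv_r; lra. }
    apply Rle_trans with (1 := rate_le_ln_1p_div_pow N alpha p x N_gt_0 Hx).
    apply Rle_trans with (rate N alpha 1 b1); [|apply rate_one_le_max; try apply Rpower_gt_0; lra].
    rewrite (rate_at_balance N alpha 1 b1 N_gt_0) by (rewrite Hb1; field; lra).
    apply Rmult_le_compat_r.
    + apply Rlt_le, Rinv_0_lt_compat, Rmult_lt_0_compat; [apply exp_pos | assumption].
    + apply (ln_1p_div_pow_nonincreasing _ (Rpower L (- (alpha / 2)))); try assumption.
      * apply Rpower_gt_0.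
      * apply Rpower_lambda_star_le; lra.
Qed.

End Maximizer.

Theorem theorem1 (alpha N : R) (Halpha : 2 < alpha) (HN : 0 < N) :
  (exists! L, 0 < L /\ lambda_star_eq alpha L) /\
  forall L, 0 < L -> lambda_star_eq alpha L ->
    (L < N -> is_maximizer (rate N alpha) (L / N) (Rpower L (- (alpha / 2)))) /\
    (N <= L ->
       (exists! b, 0 < b /\ beta_star_eq alpha N b) /\
       forall b, 0 < b -> beta_star_eq alpha N b ->
         is_maximizer (rate N alpha) 1 b).
Proof.
  split; [apply lambda_star_exists_unique, Halpha|].
  intros L HL HLeq. split.
  - apply rate_max_interior; assumption.
  - intro HNL. split.
    + apply (beta_star_exists_unique alpha N L); assumption.
    + intros b Hb Hbeq. apply (rate_max_boundary alpha N L); assumption.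
Qed.
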